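(* Let $\lambda>0$, $r\in(0,1)$, $U(w)=-e^{-\lambda w}$, and $\hat m_{\lambda,r}=\frac{r e^{\lambda}}{re^{\lambda}+1-r}$. For every $m\in[\hat m_{\lambda,r},1)$ and every $v\in[0,D(m)]$, if $X$ has distribution function $F_{m,v}$, then $\gamma=1$ maximizes $\mathbb E\,U(1+r+\gamma(X-r))$ over $\gamma\in[0,1]$; i.e. $\gamma^*_{\lambda,r}(m,v)=1$.
   Context: $D(m)=m-m^2$. For $0<v<D(m)$, $F_{m,v}$ is the distribution function of the Beta law with mean $m$ and variance $v$, i.e. Beta$(\alpha,\beta)$ with $\alpha=\frac{m(m-m^2-v)}{v}$, $\beta=\frac{(1-m)(m-m^2-v)}{v}$; $F_{m,0}$ is the distribution function of the Dirac mass at $m$; $F_{m,D(m)}(x)=1-m$ for $0\le x<1$ and $F_{m,D(m)}(1)=1$ (Bernoulli law with parameter $m$). Initial wealth is normalized to 1; $\gamma$ is the fraction invested in the risky return $X$, the rest earning the risk-free return $r$. *)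

From HB Require Import structures.
From mathcomp Require Import all_boot all_order all_algebra.
From mathcomp Require Import all_classical all_reals all_analysis.
Set Implicit Arguments. Unset Strict Implicit. Unset Printing Implicit Defensive.
Import Order.TTheory GRing.Theory Num.Theory.
Local Open Scope classical_set_scope.
Local Open Scope ring_scope.

Section defs.
Context {R : realType}.

Definition Dvar (m : R) : R := m - m ^+ 2.

(* Beta parameters with mean m and variance v *)
Definition beta_alpha (m v : R) : R := m * (m - m ^+ 2 - v) / v.
Definition beta_beta (m v : R) : R := (1 - m) * (m - m ^+ 2 - v) / v.

Definition beta_dens (a b : R) (x : R) : R := x `^ (a - 1) * (1 - x) `^ (b - 1).

Definition beta_expect (a b : R) (g : R -> R) : R :=
  fine (\int[lebesgue_measure]_(x in `]0, 1[) (g x * beta_dens a b x)%:E) /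
  fine (\int[lebesgue_measure]_(x in `]0, 1[) (beta_dens a b x)%:E).

(* E[g(X)] for X with distribution function F_{m,v}, 0 <= v <= D(m):
   Dirac at m if v = 0, Bernoulli(m) if v = D(m), Beta otherwise *)
Definition Fmv_expect (m v : R) (g : R -> R) : R :=
  if v == 0 then g m
  else if v == Dvar m then (1 - m) * g 0 + m * g 1
  else beta_expect (beta_alpha m v) (beta_beta m v) g.

Definition cara (lam : R) (w : R) : R := - expR (- lam * w).

Definition exp_util (lam r m v gamma : R) : R :=
  Fmv_expect m v (fun x => cara lam (1 + r + gamma * (x - r))).

Definition mhat (lam r : R) : R :=
  r * expR lam / (r * expR lam + 1 - r).

End defs.

From mathcomp Require Import all_boot all_order all_algebra.
From mathcomp Require Import all_classical all_reals all_analysis.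
From mathcomp Require Import ring lra measurable_realfun.
Import Order.TTheory GRing.Theory Num.Theory numFieldNormedType.Exports.
Set Implicit Arguments. Unset Strict Implicit. Unset Printing Implicit Defensive.
Local Open Scope ring_scope.

(* Write w_g(x) = 1 + r + g (x - r) and ell(x) = -r + (r + (1 - r) e^{-lam}) x.
   1. Pointwise (cara_gain_le): for g, x in [0, 1],
        U(w_g(x)) - U(w_1(x)) <= (g - 1) lam e^{-lam} ell(x),
      from the tangent bound exp t >= 1 + t and the fact that ell is the chord
      of x |-> (x - r) e^{-lam x} on [0, 1], which it lies below.
   2. ell vanishes at mhat and increases, so ell(m) >= 0 (ell_ge0).
   3. Taking expectations, only E[ell(X)] >= ell(m) is needed.  It is exact
      for the Dirac and Bernoulli laws; for Beta(a, b) it reduces to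
      E X >= a / (a + b), proved by integrating the derivative q of
      F(x) = x^a (1 - x)^b: the integral of q over ]0, 1[ is at most
      F(1 - e) <= e^b for every small e (FTC on compact subintervals, and
      monotone convergence near 0 where q >= 0). *)

Section real_analysis.
Context {R : realType}.
Local Open Scope classical_set_scope.
Notation mu := (@lebesgue_measure R).

Lemma is_derive_continuous (f : R -> R) (x d : R) :
  is_derive x 1 f d -> {for x, continuous f}.
Proof.
by move=> fd; apply/differentiable_continuous/derivable1_diffP; exact: ex_derive.
Qed.

Lemma is_derive_onem (x : R) : is_derive x 1 (fun y : R => 1 - y) (-1).
Proof. by rewrite -[-1]sub0r; apply: is_deriveB. Qed.

Lemma powR_pred (x c : R) : 0 < x -> x `^ c = x * x `^ (c - 1).
Proof.
move=> x0; rewrite -{2}(powRr1 (ltW x0)) -powRD; first by rewrite addrC subrK.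
by rewrite (gt_eqF x0) implybT.
Qed.

Lemma integrable_bounded_mul (D : set R) (k g : R -> R) (M : R) :
  measurable D -> measurable_fun D k -> (forall x, D x -> `|k x| <= M) ->
  mu.-integrable D (EFin \o g) -> mu.-integrable D (EFin \o (fun x => k x * g x)).
Proof.
move=> mD mk kM ig.
have k_bounded : [bounded k x | x in D].
  exists M; split; first exact: num_real.
  by move=> y My x Dx; exact: le_trans (kM x Dx) (ltW My).
have := @integrableMr _ (measurableTypeR R) R mu D mD k _ mk k_bounded ig.
by congr (_.-integrable _ _); apply/funext => x /=; rewrite EFinM.
Qed.

Lemma integrable_scale (D : set R) (k : R) (g : R -> R) : measurable D ->
  mu.-integrable D (EFin \o g) -> mu.-integrable D (EFin \o (fun x => k * g x)).
Proof.
move=> mD ig; have := @integrableZl _ (measurableTypeR R) R mu D mD k _ ig.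
by congr (_.-integrable _ _); apply/funext => x /=; rewrite EFinM.
Qed.

Lemma Rintegral_split (f : R -> R) (l c u : R) : l < c -> c < u ->
  mu.-integrable `]l, u[ (EFin \o f) ->
  Rintegral mu `]l, u[ f = Rintegral mu `]l, c] f + Rintegral mu `]c, u[ f.
Proof.
move=> lc cu hf.
have E : `]l, u[ = `]l, c] `|` `]c, u[ :> set R.
  by apply: itv_bndbnd_setU; rewrite bnd_simp ?ltW.
rewrite E Rintegral_setU //; first by rewrite -E.
apply/disj_setPS => x [] /=; rewrite !in_itv /= => /andP[_ h1] /andP[h2 _].
by have := le_lt_trans h1 h2; rewrite ltxx.
Qed.

Lemma EFin_Rintegral (D : set R) (f : R -> R) : measurable D ->
  mu.-integrable D (EFin \o f) ->
  (Rintegral mu D f)%:E = (\int[mu]_(x in D) (f x)%:E)%E.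
Proof.
by move=> mD If; rewrite fineK // (@integrable_fin_num _ (measurableTypeR R) R mu _ mD _ If).
Qed.

Lemma cc_exhaust_lt (c : R) (n : nat) : 0 < c -> 0 < c / n.+2%:R < c.
Proof.
move=> c0; apply/andP; split; first by rewrite divr_gt0 ?ltr0n.
have : 1 < n.+2%:R :> R by rewrite ltr1n.
by rewrite ltr_pdivrMr ?ltr0n //; nra.
Qed.

Lemma nondecreasing_cc_exhaust (c : R) : 0 < c ->
  nondecreasing_seq (fun n : nat => `[c / n.+2%:R, c] : set R).
Proof.
move=> c0; apply/nondecreasing_seqP => n; rewrite subsetEset => x /=.
rewrite !in_itv /= => /andP[h1 ->]; rewrite andbT; apply: le_trans h1.
by rewrite ler_pM2l // lef_pV2 ?posrE ?ltr0n // ler_nat.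
Qed.

Lemma bigcup_cc_exhaust (c : R) : 0 < c ->
  \bigcup_n (`[c / n.+2%:R, c] : set R) = `]0, c].
Proof.
move=> c0; apply/seteqP; split=> x.
  move=> [n _]; rewrite /= !in_itv /= => /andP[h1 ->]; rewrite andbT.
  by have /andP[lo _] := cc_exhaust_lt n c0; exact: lt_le_trans lo h1.
rewrite /= in_itv /= => /andP[x0 xc].
exists (Num.truncn (c / x)) => //; rewrite /= in_itv /= xc andbT.
have := truncnS_gt (c / x); rewrite ltr_pdivrMr // => h.
by rewrite ler_pdivrMr ?ltr0n // -addn1 natrD; nra.
Qed.

(* Monotone convergence on ]0, c]: a bound on the integrals of a nonnegative
   function over all the intervals [l, c] with 0 < l bounds its integral
   over ]0, c]. *)
Lemma Rintegral_oc0_le (f : R -> R) (c K : R) : 0 < c ->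
  mu.-integrable `]0, c] (EFin \o f) -> (forall x, 0 < x <= c -> 0 <= f x) ->
  (forall l, 0 < l < c -> Rintegral mu `[l, c] f <= K) ->
  Rintegral mu `]0, c] f <= K.
Proof.
move=> c0 If f0 bnd.
set Fs := fun n : nat => `[c / n.+2%:R, c] : set R.
have cup := bigcup_cc_exhaust c0.
have sub n : Fs n `<=` `]0, c] by rewrite -cup; exact: bigcup_sup.
have mf n : measurable_fun (Fs n) (EFin \o f).
  exact: measurable_funS (measurable_int _ If).
have f0' n x : Fs n x -> (0 <= (EFin \o f) x)%E.
  by move=> /sub /= /[!in_itv] /= /f0; rewrite lee_fin.
have cv := @ge0_nondecreasing_set_cvg_integral _ (measurableTypeR R) R Fs
  (EFin \o f) mu (nondecreasing_cc_exhaust c0) (fun n => measurable_itv _) mf f0'.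
rewrite -lee_fin EFin_Rintegral // -cup -(cvg_lim _ cv) //.
apply: lime_le; first by apply/cvg_ex; eexists; exact: cv.
apply: nearW => n; rewrite -EFin_Rintegral ?lee_fin; first exact/bnd/cc_exhaust_lt.
  exact: measurable_itv.
by apply: integrableS If => //; exact: measurable_itv.
Qed.

Lemma le0_of_le_powR (s b d : R) : 0 < b -> 0 < d ->
  (forall e, 0 < e < d -> s <= e `^ b) -> s <= 0.
Proof.
move=> b0 d0 hs; rewrite leNgt; apply/negP => s0.
set e := Num.min (d / 2) ((s / 2) `^ b^-1).
have e0 : 0 < e by rewrite lt_min; apply/andP; split; [lra | apply: powR_gt0; lra].
have ed : e < d by rewrite gt_min; apply/orP; left; lra.
have : e `^ b <= s / 2.
  have := @ge0_ler_powR R b (ltW b0) e ((s / 2) `^ b^-1).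
  rewrite !nnegrE -powRrM mulVf ?gt_eqF // powRr1; last lra.
  by move=> -> //; [exact: ltW | exact: powR_ge0 | rewrite ge_min lexx orbT].
by have := hs e (introT andP (conj e0 ed)); lra.
Qed.

End real_analysis.

Section cara_bound.
Context {R : realType}.
Variables (lam r : R).
Hypotheses (lam_gt0 : 0 < lam) (r01 : 0 < r < 1).

(* The affine function whose sign decides the comparison: it vanishes exactly
   at mhat lam r and is increasing. *)
Definition ell (x : R) : R := - r + (r + (1 - r) * expR (- lam)) * x.

(* On [0, 1], ell is the chord of x |-> (x - r) exp(-lam x) and lies below it. *)
Lemma ell_le_tilted x : 0 <= x <= 1 -> ell x <= (x - r) * expR (- lam * x).
Proof.
move: r01 => /andP[r0 r1] /andP[x0 x1].
have e1 : expR (- lam * x) <= 1 by rewrite expR_le1 mulNr oppr_le0 mulr_ge0 // ltW.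
have e2 : expR (- lam) <= expR (- lam * x).
  by rewrite ler_expR !mulNr lerN2 ler_piMr // ltW.
have e3 : 0 < expR (- lam) := expR_gt0 _.
rewrite /ell; have [xr|xr] := ltP x r.
  have h1 : 0 <= (r - x) * (1 - expR (- lam * x)) by apply: mulr_ge0; lra.
  have h2 : 0 <= x * (1 - r) * (1 - expR (- lam)).
    by apply: mulr_ge0; [apply: mulr_ge0|]; lra.
  nra.
have h1 : 0 <= (x - r) * (expR (- lam * x) - expR (- lam)) by apply: mulr_ge0; lra.
have h2 : 0 <= r * (1 - x) * (1 - expR (- lam)).
  by apply: mulr_ge0; [apply: mulr_ge0|]; lra.
nra.
Qed.

Lemma gain_coef_le0 g : g <= 1 -> (g - 1) * lam * expR (- lam) <= 0.
Proof.
move=> g1; rewrite -mulrA mulr_le0_ge0 ?subr_le0 //.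
by rewrite mulr_ge0 ?expR_ge0 // ltW.
Qed.

(* Pointwise comparison of the utilities of the wealths for gamma and for 1:
   the tangent bound exp t >= 1 + t at the wealth for gamma = 1, followed by
   ell_le_tilted. *)
Lemma cara_gain_le g x : 0 <= g <= 1 -> 0 <= x <= 1 ->
  cara lam (1 + r + g * (x - r)) - cara lam (1 + r + 1 * (x - r)) <=
  (g - 1) * lam * expR (- lam) * ell x.
Proof.
move=> /andP[g0 g1] x01.
set u1 := - lam * (1 + r + 1 * (x - r)).
set t := (1 - g) * lam * (x - r).
have split_exp : expR (- lam * (1 + r + g * (x - r))) = expR u1 * expR t.
  by rewrite -expRD; congr expR; rewrite /u1 /t; ring.
have tangent : 1 + t <= expR t := expR_ge1Dx t.
have u1_gt0 : 0 < expR u1 := expR_gt0 u1.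
have tangent_gain : - (expR u1 * expR t) - - expR u1 <= - expR u1 * t.
  by have := ler_wpM2l (ltW u1_gt0) tangent; lra.
have e_u1 : expR u1 = expR (- lam) * expR (- lam * x).
  by rewrite -expRD; congr expR; rewrite /u1; ring.
have slope : - expR u1 * t = (g - 1) * lam * expR (- lam) * ((x - r) * expR (- lam * x)).
  by rewrite e_u1 /t; ring.
rewrite slope in tangent_gain.
rewrite /cara split_exp; apply: le_trans tangent_gain _.
by apply: ler_wnM2l; [exact: gain_coef_le0 | exact: ell_le_tilted].
Qed.

Lemma ell_ge0 m : mhat lam r <= m -> 0 <= ell m.
Proof.
move: r01 => /andP[r0 r1] hm.
have E0 : 0 < expR lam := expR_gt0 lam.
have den0 : 0 < r * expR lam + 1 - r by have := mulr_gt0 r0 E0; lra.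
rewrite /mhat ler_pdivrMr // in hm.
rewrite -(pmulr_lge0 _ E0).
have -> : ell m * expR lam = m * (r * expR lam + 1 - r) - r * expR lam.
  by rewrite /ell expRN; field; rewrite gt_eqF.
lra.
Qed.

Lemma continuous_cara : continuous (cara lam).
Proof.
move=> w; apply: cvgN; apply: continuous_comp; last exact: continuous_expR.
exact: continuousM (cvg_cst _) cvg_id.
Qed.

Lemma cara_abs_le1 w : 0 <= w -> `|cara lam w| <= 1.
Proof.
move=> w0; rewrite /cara normrN ger0_norm ?expR_ge0 // expR_le1.
by rewrite mulNr oppr_le0 mulr_ge0 // ltW.
Qed.

Lemma wealth_ge0 g x : 0 <= g <= 1 -> 0 <= x -> 0 <= 1 + r + g * (x - r).
Proof.
move: r01 => /andP[r0 r1] /andP[g0 g1] x0.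
have : 0 <= g * x by exact: mulr_ge0.
have : g * r <= r by rewrite ler_piMl // ltW.
lra.
Qed.

End cara_bound.

Section beta_score.
Context {R : realType}.
Local Open Scope classical_set_scope.
Notation mu := (@lebesgue_measure R).
Variables (a b : R).

Definition beta_prim (x : R) : R := x `^ a * (1 - x) `^ b.

(* q(x) = (a - (a + b) x) x^(a-1) (1 - x)^(b-1) = (a + b) (mean - x) * density. *)
Definition beta_score (x : R) : R := (a - (a + b) * x) * beta_dens a b x.

Lemma beta_dens_ge0 (x : R) : 0 <= beta_dens a b x.
Proof. by rewrite /beta_dens mulr_ge0 // powR_ge0. Qed.

Lemma beta_prim_ge0 (x : R) : 0 <= beta_prim x.
Proof. by rewrite /beta_prim mulr_ge0 // powR_ge0. Qed.

Lemma is_derive_beta_prim (x : R) : 0 < x < 1 -> is_derive x 1 beta_prim (beta_score x).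
Proof.
move=> /andP[x0 x1]; have omx0 : 0 < 1 - x by lra.
have d1 : is_derive x 1 (@powR R ^~ a) (a * x `^ (a - 1)) := is_derive1_powR a x0.
have d2 : is_derive x 1 ((@powR R ^~ b) \o (fun y => 1 - y)) (b * (1 - x) `^ (b - 1) * -1).
  by apply: is_derive1_comp (is_derive_onem x); exact: is_derive1_powR.
have -> : beta_prim = (@powR R ^~ a) * ((@powR R ^~ b) \o (fun y => 1 - y)) by [].
apply: is_derive_eq.
rewrite /beta_score /beta_dens /= (powR_pred a x0) (powR_pred b omx0).
by rewrite /GRing.scale /=; ring.
Qed.

Lemma continuous_beta_score (x : R) : 0 < x < 1 -> {for x, continuous beta_score}.
Proof.
move=> /andP[x0 x1]; have omx0 : 0 < 1 - x by lra.
have affine : {for x, continuous (fun y : R => a - (a + b) * y)}.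
  exact: continuousB (cvg_cst _) (continuousM (cvg_cst _) cvg_id).
have pow1 : {for x, continuous (@powR R ^~ (a - 1))}.
  exact: is_derive_continuous (is_derive1_powR _ x0).
have pow2 : {for x, continuous ((@powR R ^~ (b - 1)) \o (fun y => 1 - y))}.
  apply: is_derive_continuous.
  by apply: is_derive1_comp (is_derive_onem x); exact: is_derive1_powR.
exact: continuousM affine (continuousM pow1 pow2).
Qed.

Lemma beta_score_FTC (c d : R) : 0 < c -> c < d -> d < 1 ->
  Rintegral mu `[c, d] beta_score = beta_prim d - beta_prim c.
Proof.
move=> c0 cd d1.
have inside x : c <= x <= d -> 0 < x < 1.
  by move=> /andP[h1 h2]; apply/andP; split; lra.
have deriv x : c <= x <= d -> is_derive x 1 beta_prim (beta_score x).
  by move=> /inside; exact: is_derive_beta_prim.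
rewrite /Rintegral (@continuous_FTC2 _ _ beta_prim) //.
- apply: continuous_in_subspaceT => x; rewrite inE /= in_itv /= => /inside.
  exact: continuous_beta_score.
- split.
  + move=> x; rewrite in_itv /= => /andP[h1 h2]; apply: ex_derive.
    by apply: deriv; rewrite !ltW.
  + apply: cvg_at_right_filter; apply: is_derive_continuous.
    by apply: deriv; rewrite lexx ltW.
  + apply: cvg_at_left_filter; apply: is_derive_continuous.
    by apply: deriv; rewrite lexx ltW.
- move=> x; rewrite in_itv /= => /andP[h1 h2]; rewrite derive1E.
  by apply: derive_val; apply: deriv; rewrite !ltW.
Qed.

Lemma beta_prim_near1 (e : R) : 0 <= a -> 0 < e < 1 -> beta_prim (1 - e) <= e `^ b.
Proof.
move=> a0 /andP[e0 e1]; rewrite /beta_prim (_ : 1 - (1 - e) = e); last by ring.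
have h : (1 - e) `^ a <= 1.
  have := @ge0_ler_powR R a a0 (1 - e) 1.
  by rewrite !nnegrE powR1 => ->; lra.
by rewrite -[leRHS]mul1r ler_wpM2r // powR_ge0.
Qed.

End beta_score.

Section beta_mean.
Context {R : realType}.
Local Open Scope classical_set_scope.
Notation mu := (@lebesgue_measure R).
Variables (a b : R).
Hypotheses (a_gt0 : 0 < a) (b_gt0 : 0 < b).
Hypothesis dens_int : mu.-integrable `]0, 1[ (EFin \o beta_dens a b).

Lemma integrable_beta_mul (k : R -> R) (M : R) :
  measurable_fun (`]0, 1[ : set R) k -> (forall x : R, 0 < x < 1 -> `|k x| <= M) ->
  mu.-integrable `]0, 1[ (EFin \o (fun x => k x * beta_dens a b x)).
Proof.
move=> mk kM; apply: integrable_bounded_mul => // x.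
by rewrite /= in_itv /=; exact: kM.
Qed.

Lemma Rintegral_affine_dens (u v : R) :
  Rintegral mu `]0, 1[ (fun x => (u + v * x) * beta_dens a b x) =
  u * Rintegral mu `]0, 1[ (beta_dens a b) +
  v * Rintegral mu `]0, 1[ (fun x => x * beta_dens a b x).
Proof.
have Ix : mu.-integrable `]0, 1[ (EFin \o (fun x => x * beta_dens a b x)).
  apply: (@integrable_beta_mul id 1); first exact: measurable_funTS.
  by move=> x /andP[x0 x1]; rewrite ger0_norm ltW.
rewrite -!RintegralZl //; rewrite -RintegralD //.
- by apply: eq_Rintegral => x _; rewrite /beta_dens; ring.
- exact: integrable_scale.
- exact: integrable_scale.
Qed.

Lemma beta_mean_in01 : 0 < a / (a + b) < 1.
Proof.
apply/andP; split; first by rewrite divr_gt0 // addr_gt0.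
by rewrite ltr_pdivrMr ?addr_gt0 // mul1r ltrDl.
Qed.

Lemma beta_score_integrable : mu.-integrable `]0, 1[ (EFin \o beta_score a b).
Proof.
apply: (@integrable_beta_mul (fun x => a - (a + b) * x) (a + (a + b))).
  by apply: measurable_funTS; apply: measurable_funB => //; exact: measurable_funM.
move=> x /andP[x0 x1]; have ab0 := addr_gt0 a_gt0 b_gt0.
apply: le_trans (ler_normB _ _) _.
by rewrite normrM !gtr0_norm // lerD2l ler_piMr // ltW.
Qed.

(* The score is nonnegative left of the mean, and its integral there is at most
   F(mean), the endpoint contribution at 0 being nonnegative. *)
Lemma beta_score_int_left :
  Rintegral mu `]0, a / (a + b)] (beta_score a b) <= beta_prim a b (a / (a + b)).
Proof.
have /andP[mean0 mean1] := beta_mean_in01.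
apply: Rintegral_oc0_le => //.
- apply: integrableS beta_score_integrable => //.
  by move=> x /=; rewrite !in_itv /= => /andP[-> /le_lt_trans ->].
- move=> x /andP[x0 xm]; rewrite /beta_score mulr_ge0 ?beta_dens_ge0 // subr_ge0.
  by rewrite ler_pdivlMr ?addr_gt0 // in xm; lra.
- move=> l /andP[l0 lm]; rewrite beta_score_FTC //.
  by have := beta_prim_ge0 a b l; lra.
Qed.

(* Right of the mean the score is nonpositive; cutting at 1 - e leaves the
   FTC value F(1 - e) - F(mean). *)
Lemma beta_score_int_right e : 0 < e -> a / (a + b) < 1 - e ->
  Rintegral mu `]a / (a + b), 1[ (beta_score a b) <=
  beta_prim a b (1 - e) - beta_prim a b (a / (a + b)).
Proof.
have /andP[mean0 mean1] := beta_mean_in01.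
set mean := a / (a + b) in mean0 mean1 *.
move=> e0 me.
have score_le0 x : mean <= x -> beta_score a b x <= 0.
  move=> xm; rewrite /beta_score mulr_le0_ge0 ?beta_dens_ge0 // subr_le0.
  by rewrite ler_pdivrMr ?addr_gt0 // in xm; lra.
have I1 : mu.-integrable `]mean, 1[ (EFin \o beta_score a b).
  apply: integrableS beta_score_integrable => //.
  by move=> x /=; rewrite !in_itv /= => /andP[/(lt_trans mean0) -> ->].
have I2 : mu.-integrable `]mean, 1 - e] (EFin \o beta_score a b).
  apply: integrableS I1 => //.
  by move=> x /=; rewrite !in_itv /= => /andP[-> ?]; lra.
rewrite (@Rintegral_split _ _ _ (1 - e)) //; last lra.
rewrite Rintegral_itv_obnd_cbnd // beta_score_FTC //; last lra.
have : 0 <= Rintegral mu `]1 - e, 1[ (fun x => -1 * beta_score a b x).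
  apply: Rintegral_ge0 => x; rewrite /= in_itv /= => /andP[x1e _].
  by rewrite mulN1r oppr_ge0 score_le0 //; lra.
have I3 : mu.-integrable `]1 - e, 1[ (EFin \o beta_score a b).
  apply: integrableS I1 => //.
  by move=> x /=; rewrite !in_itv /= => /andP[? ->]; rewrite andbT; lra.
by rewrite RintegralZl //; lra.
Qed.

(* Hence the score has nonpositive integral, i.e. the mean of the Beta law is
   at least a / (a + b) (it is in fact equal to it). *)
Lemma beta_score_int_le0 : Rintegral mu `]0, 1[ (beta_score a b) <= 0.
Proof.
have /andP[mean0 mean1] := beta_mean_in01.
apply: (@le0_of_le_powR _ _ b (1 - a / (a + b))) => //; first lra.
move=> e /andP[e0 e_small].
have e01 : 0 < e < 1 by apply/andP; split; lra.
have cut : a / (a + b) < 1 - e by lra.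
rewrite (@Rintegral_split _ _ _ (a / (a + b))) //; last exact: beta_score_integrable.
have := beta_score_int_left; have := beta_score_int_right e0 cut.
have := @beta_prim_near1 _ a b e (ltW a_gt0) e01.
lra.
Qed.

Lemma beta_mean_ge :
  a / (a + b) * Rintegral mu `]0, 1[ (beta_dens a b) <=
  Rintegral mu `]0, 1[ (fun x => x * beta_dens a b x).
Proof.
have := beta_score_int_le0.
have -> : Rintegral mu `]0, 1[ (beta_score a b) =
    Rintegral mu `]0, 1[ (fun x => (a + (- (a + b)) * x) * beta_dens a b x).
  by apply: eq_Rintegral => x _; rewrite /beta_score mulNr.
rewrite Rintegral_affine_dens mulNr mulrAC ler_pdivrMr ?addr_gt0 //; lra.
Qed.

End beta_mean.

Section beta_expectation.
Context {R : realType}.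
Local Open Scope classical_set_scope.
Notation mu := (@lebesgue_measure R).

Lemma measurable_beta_dens (a b : R) : measurable_fun [set: R] (beta_dens a b).
Proof.
apply: measurable_funM; first exact: measurable_powR.
by apply: measurableT_comp (measurable_powR _) _; exact: measurable_funB.
Qed.

(* A nonzero normalizing constant forces the density to be integrable
   (otherwise its integral is +oo, whose fine part is 0). *)
Lemma beta_dens_integrable (a b : R) :
  fine (\int[mu]_(x in `]0%R, 1%R[) (beta_dens a b x)%:E)%E != 0 ->
  mu.-integrable `]0, 1[ (EFin \o beta_dens a b).
Proof.
move=> Z0; apply/integrableP; split.
  by apply/measurable_EFinP; apply: measurable_funTS; exact: measurable_beta_dens.
have -> : (fun x => `|(EFin \o beta_dens a b) x|)%E = EFin \o beta_dens a b.
  by apply/funext => x /=; rewrite ger0_norm // beta_dens_ge0.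
rewrite -ge0_fin_numE; last by apply: integral_ge0 => x _; rewrite lee_fin beta_dens_ge0.
by move: Z0; apply: contraNT; rewrite fin_numE negb_and !negbK => /orP[] /eqP ->.
Qed.

Lemma beta_affine_ge0 (a b p0 p1 : R) : 0 < a -> 0 < b ->
  mu.-integrable `]0, 1[ (EFin \o beta_dens a b) ->
  0 <= p1 -> 0 <= p0 + p1 * (a / (a + b)) ->
  0 <= Rintegral mu `]0, 1[ (fun x => (p0 + p1 * x) * beta_dens a b x).
Proof.
move=> a0 b0 Idens p1_ge0 at_mean.
have Z_ge0 : 0 <= Rintegral mu `]0, 1[ (beta_dens a b).
  by apply: Rintegral_ge0 => x _; exact: beta_dens_ge0.
have mean_ge := ler_wpM2l p1_ge0 (beta_mean_ge a0 b0 Idens).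
rewrite Rintegral_affine_dens //; apply: le_trans (mulr_ge0 at_mean Z_ge0) _.
by rewrite mulrDl -mulrA lerD2l.
Qed.

Lemma beta_expect_le (a b c p0 p1 M : R) (f1 f2 : R -> R) : 0 < a -> 0 < b ->
  measurable_fun (`]0, 1[ : set R) f1 -> measurable_fun (`]0, 1[ : set R) f2 ->
  (forall x : R, 0 < x < 1 -> `|f1 x| <= M) -> (forall x : R, 0 < x < 1 -> `|f2 x| <= M) ->
  (forall x : R, 0 < x < 1 -> f1 x - f2 x <= c * (p0 + p1 * x)) ->
  c <= 0 -> 0 <= p1 -> 0 <= p0 + p1 * (a / (a + b)) ->
  beta_expect a b f1 <= beta_expect a b f2.
Proof.
move=> a0 b0 mf1 mf2 f1M f2M dom c_le0 p1_ge0 at_mean.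
rewrite /beta_expect.
set Z := fine (\int[mu]_(x in `]0%R, 1%R[) (beta_dens a b x)%:E)%E.
have [->|Z0] := eqVneq Z 0; first by rewrite invr0 !mulr0.
have Idens := beta_dens_integrable Z0.
apply: ler_wpM2r.
  by rewrite invr_ge0 fine_ge0 // integral_ge0 // => x _; rewrite lee_fin beta_dens_ge0.
change (Rintegral mu `]0, 1[ (fun x => f1 x * beta_dens a b x) <=
        Rintegral mu `]0, 1[ (fun x => f2 x * beta_dens a b x)).
have If1 := integrable_beta_mul Idens mf1 f1M.
have If2 := integrable_beta_mul Idens mf2 f2M.
have Idiff : mu.-integrable `]0, 1[
    (EFin \o (fun x => (f1 x - f2 x) * beta_dens a b x)).
  apply: (integrable_beta_mul Idens (M := M + M)); first exact: measurable_funB.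
  by move=> x x01; apply: le_trans (ler_normB _ _) (lerD (f1M x x01) (f2M x x01)).
have Iaff : mu.-integrable `]0, 1[ (EFin \o (fun x => (p0 + p1 * x) * beta_dens a b x)).
  apply: (integrable_beta_mul Idens (M := `|p0| + `|p1|)).
    by apply: measurable_funTS; apply: measurable_funD => //; exact: measurable_funM.
  move=> x /andP[x0 x1]; apply: le_trans (ler_normD _ _) _.
  by rewrite lerD2l normrM ler_piMr // ger0_norm ltW.
rewrite -subr_le0 -RintegralB //.
under eq_Rintegral => x _ do rewrite -mulrBl.
apply: le_trans (_ : _ <= Rintegral mu `]0, 1[
    (fun x => c * ((p0 + p1 * x) * beta_dens a b x))) _.
  apply: le_Rintegral => //; first exact: integrable_scale.
  move=> x; rewrite /= in_itv /= => x01.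
  by rewrite mulrA ler_wpM2r ?beta_dens_ge0 ?dom.
by rewrite RintegralZl // mulr_le0_ge0 // beta_affine_ge0.
Qed.

End beta_expectation.

Section Fmv_expectation.
Context {R : realType}.

Lemma beta_params (m v : R) : 0 < v < Dvar m ->
  [/\ 0 < beta_alpha m v, 0 < beta_beta m v &
      beta_alpha m v / (beta_alpha m v + beta_beta m v) = m].
Proof.
rewrite /Dvar => /andP[v0 vD].
have gap : 0 < m - m ^+ 2 - v by lra.
have /andP[m0 m1] : 0 < m < 1 by apply/andP; split; nra.
rewrite /beta_alpha /beta_beta; split.
- by rewrite divr_gt0 // mulr_gt0.
- by rewrite divr_gt0 // mulr_gt0 // subr_gt0.
- field; rewrite gt_eqF //= (_ : _ + _ = m - m ^+ 2 - v) ?gt_eqF //; ring.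
Qed.

(* Only the mean of the law matters, and for the Beta
   laws only the inequality E X >= mean. *)
Lemma Fmv_expect_le (m v c p0 p1 M : R) (f1 f2 : R -> R) :
  0 <= v <= Dvar m ->
  measurable_fun (`]0, 1[ : set R) f1 -> measurable_fun (`]0, 1[ : set R) f2 ->
  (forall x : R, 0 < x < 1 -> `|f1 x| <= M) -> (forall x : R, 0 < x < 1 -> `|f2 x| <= M) ->
  (forall x : R, 0 <= x <= 1 -> f1 x - f2 x <= c * (p0 + p1 * x)) ->
  c <= 0 -> 0 <= p1 -> 0 <= p0 + p1 * m ->
  Fmv_expect m v f1 <= Fmv_expect m v f2.
Proof.
move=> /andP[v0 vD] mf1 mf2 f1M f2M dom c_le0 p1_ge0 at_mean.
have m01 : 0 <= m <= 1 by rewrite /Dvar in vD; apply/andP; split; nra.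
have /andP[m0 m1] := m01.
have at_mean_le0 : c * (p0 + p1 * m) <= 0 by exact: mulr_le0_ge0.
rewrite /Fmv_expect; case: eqP => [_|/eqP v_neq0].
  by have := dom m m01; lra.
case: eqP => [_|/eqP vD_neq].
  have at0 : f1 0 - f2 0 <= c * (p0 + p1 * 0) by apply: dom; rewrite lexx ler01.
  have at1 : f1 1 - f2 1 <= c * (p0 + p1 * 1) by apply: dom; rewrite lexx ler01.
  have m1' : 0 <= 1 - m by lra.
  by have := ler_wpM2l m1' at0; have := ler_wpM2l m0 at1; lra.
have v_gt0 : 0 < v by rewrite lt_neqAle eq_sym v_neq0.
have v_lt : v < Dvar m by rewrite lt_neqAle vD_neq.
have [a0 b0 mean] := beta_params (introT andP (conj v_gt0 v_lt)).
apply: (beta_expect_le (p0 := p0) a0 b0 mf1 mf2 f1M f2M _ c_le0 p1_ge0); last by rewrite mean.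
by move=> x /andP[x0 x1]; apply: dom; rewrite !ltW.
Qed.

End Fmv_expectation.

Theorem proposition8 (R : realType) (lam r m v : R) :
  0 < lam -> 0 < r < 1 ->
  mhat lam r <= m < 1 -> 0 <= v <= Dvar m ->
  forall gamma : R, 0 <= gamma <= 1 ->
    exp_util lam r m v gamma <= exp_util lam r m v 1.
Proof.
move=> lam_gt0 r01 /andP[mhat_le_m _] v_range g g01.
have bounded k : 0 <= k <= 1 ->
    forall x, 0 < x < 1 -> `|cara lam (1 + r + k * (x - r))| <= 1.
  by move=> k01 x /andP[x0 _]; apply: cara_abs_le1 => //; apply: wealth_ge0 => //; exact: ltW.
have measurable_utility k :
    measurable_fun (`]0, 1[ : set R) (fun x => cara lam (1 + r + k * (x - r))).
  apply: measurable_funTS; apply: measurableT_comp.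
    by apply: continuous_measurable_fun; exact: continuous_cara.
  by apply: measurable_funD => //; apply: measurable_funM => //; exact: measurable_funB.
apply: (Fmv_expect_le (c := (g - 1) * lam * expR (- lam)) (p0 := - r)
  (p1 := r + (1 - r) * expR (- lam)) (M := 1) v_range
  (measurable_utility g) (measurable_utility 1)).
- exact: bounded.
- by apply: bounded; rewrite ler01 lexx.
- by move=> x x01; exact: cara_gain_le.
- by apply: gain_coef_le0; case/andP: g01.
- by move: r01 => /andP[r0 r1]; have := expR_ge0 (- lam); nra.
- exact: ell_ge0.
Qed.
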